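(* Let $X$ be a compact metric space and $F\colon X\to 2^X$ a set-valued mapping with the specification property. Then the shift map $\sigma\colon\varprojlim F\to\varprojlim F$ has the specification property (as a single-valued continuous map on the compact metric space $\varprojlim F$).
   Context: $d$ is the metric on $X$; $2^X$ is the space of nonempty closed subsets of $X$; a set-valued mapping is an upper semicontinuous $F\colon X\to 2^X$. An orbit of $x$ under $F$ is a sequence $(x_j)_{j=0}^\infty$ with $x_0=x$, $x_{j+1}\in F(x_j)$. The inverse limit is $\varprojlim F=\{(x_0,x_1,x_2,\dots)\in X^{\mathbb{N}}: x_i\in F(x_{i+1})\text{ for all } i\}$, a subspace of the product $X^{\mathbb{N}}$ (with any compatible metric, e.g. $\sum_i 2^{-i}\min(1,d(x_i,y_i))$), and $\sigma(x_0,x_1,\dots)=(x_1,x_2,\dots)$. A set-valued $F$ has the specification property if for every $\epsilon>0$ there is $M\in\mathbb{N}$ such that for any $n$, any $x^1,\dots,x^n\in X$, any integers $0\le a_1\le b_1<a_2\le\dots<a_n\le b_n$ with $a_{i+1}-b_i>M$, any orbits $(x^i_j)_{j=0}^\infty$ of the $x^i$, and any $P>M+b_n-a_1$, there is $z\in X$ with an orbit $(z_j)_{j=0}^\infty$ with $d(z_j,x^i_j)<\epsilon$ for $1\le i\le n$, $a_i\le j\le b_i$, and $z_P=z$. For a single-valued continuous map $\sigma$ this means (orbits being unique): for every $\epsilon>0$ there is $M$ such that for any points $x^1,\dots,x^n$, any such $a_i,b_i$ with $a_{i+1}-b_i>M$, and any $P>M+b_n-a_1$, there is $z$ with $d(\sigma^j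 z,\sigma^j x^i)<\epsilon$ for $a_i\le j\le b_i$ and $\sigma^P z=z$. *)

From Stdlib Require Export Reals Lra Lia List.
Open Scope R_scope.

Set Implicit Arguments.

Definition is_metric (X : Type) (d : X -> X -> R) : Prop :=
  (forall x y, 0 <= d x y) /\
  (forall x y, d x y = 0 <-> x = y) /\
  (forall x y, d x y = d y x) /\
  (forall x y z, d x z <= d x y + d y z).

Definition is_open (X : Type) (d : X -> X -> R) (U : X -> Prop) : Prop :=
  forall x, U x -> exists r, 0 < r /\ forall y, d x y < r -> U y.

Definition is_closed (X : Type) (d : X -> X -> R) (A : X -> Prop) : Prop :=
  is_open d (fun x => ~ A x).

Definition is_compact (X : Type) (d : X -> X -> R) : Prop :=
  forall (I : Type) (U : I -> X -> Prop),
    (forall i, is_open d (U i)) ->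
    (forall x, exists i, U i x) ->
    exists l : list I, forall x, exists i, In i l /\ U i x.

(** F : X -> 2^X : nonempty closed values, upper semicontinuous. *)
Definition set_valued_map (X : Type) (d : X -> X -> R) (F : X -> X -> Prop) : Prop :=
  (forall x, exists y, F x y) /\
  (forall x, is_closed d (F x)) /\
  (forall x (U : X -> Prop), is_open d U -> (forall y, F x y -> U y) ->
     exists delta, 0 < delta /\
       forall x', d x x' < delta -> forall y, F x' y -> U y).

Definition is_orbit (X : Type) (F : X -> X -> Prop) (x : X) (o : nat -> X) : Prop :=
  o 0%nat = x /\ forall j, F (o j) (o (S j)).

(** Specification property for a set-valued map.  The n blocks are indexed
    by i < n (0-based); [pts i] is the point x^i, [orb i] its chosen orbit. *)
Definition spec_setvalued (X : Type) (d : X -> X -> R) (F : X -> X -> Prop) : Prop :=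
  forall eps, 0 < eps ->
  exists M : nat,
    forall (n : nat) (pts : nat -> X) (a b : nat -> nat) (orb : nat -> nat -> X) (P : nat),
      (0 < n)%nat ->
      (forall i, (i < n)%nat -> (a i <= b i)%nat) ->
      (forall i, (S i < n)%nat -> (a (S i) - b i > M)%nat) ->
      (forall i, (i < n)%nat -> is_orbit F (pts i) (orb i)) ->
      (P > M + b (pred n) - a 0%nat)%nat ->
      exists (z : X) (zo : nat -> X),
        is_orbit F z zo /\
        (forall i j, (i < n)%nat -> (a i <= j <= b i)%nat -> d (zo j) (orb i j) < eps) /\
        zo P = z.

Definition in_invlim (X : Type) (F : X -> X -> Prop) (s : nat -> X) : Prop :=
  forall i, F (s (S i)) (s i).

Definition shift (X : Type) (s : nat -> X) : nat -> X := fun k => s (S k).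

Definition shift_iter (X : Type) (j : nat) (s : nat -> X) : nat -> X :=
  fun k => s (j + k)%nat.

(** The product metric D(s,t) = sum_i 2^{-i} min(1, d(s_i,t_i)) is < eps.
    (The series always converges, and its sum is unique.) *)
Definition invlim_dist_lt (X : Type) (d : X -> X -> R) (s t : nat -> X) (eps : R) : Prop :=
  exists l, infinite_sum (fun i => (/ 2) ^ i * Rmin 1 (d (s i) (t i))) l /\ l < eps.

Definition spec_shift (X : Type) (d : X -> X -> R) (F : X -> X -> Prop) : Prop :=
  forall eps, 0 < eps ->
  exists M : nat,
    forall (n : nat) (pts : nat -> nat -> X) (a b : nat -> nat) (P : nat),
      (0 < n)%nat ->
      (forall i, (i < n)%nat -> in_invlim F (pts i)) ->
      (forall i, (i < n)%nat -> (a i <= b i)%nat) ->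
      (forall i, (S i < n)%nat -> (a (S i) - b i > M)%nat) ->
      (P > M + b (pred n) - a 0%nat)%nat ->
      exists z : nat -> X,
        in_invlim F z /\
        (forall i j, (i < n)%nat -> (a i <= j <= b i)%nat ->
           invlim_dist_lt d (shift_iter j z) (shift_iter j (pts i)) eps) /\
        shift_iter P z = z.

(* Reading a point of the inverse limit backwards from a large index T gives an
   F-orbit.  So the blocks of the shift are turned, reversed and shifted by T,
   into blocks for F; specification for F yields a periodic F-orbit shadowing
   them, and reading that orbit backwards (periodically) gives a periodic point
   of the inverse limit.  Closeness on the first N coordinates suffices for the
   product metric, because the remaining coordinates carry weight at most 2^-N;
   the reversal only needs N extra coordinates at the end of each block. *)

From Stdlib Require Import ClassicalEpsilon FunctionalExtensionality.

Lemma sum_geometric_le (A x : R) (m : nat) : 0 <= x < 1 -> 0 <= A ->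
  sum_f_R0 (fun k => x ^ k * A) m <= A / (1 - x).
Proof.
  intros Hx HA.
  rewrite <- scal_sum, tech3 by lra.
  assert (0 <= x ^ S m) by (apply pow_le; lra).
  unfold Rdiv. apply Rmult_le_compat_l; [lra|].
  rewrite <- (Rmult_1_l (/ (1 - x))) at 2.
  apply Rmult_le_compat_r; [apply Rlt_le, Rinv_0_lt_compat|]; lra.
Qed.

Lemma infinite_sum_lt_of_partial_sums_le (f : nat -> R) (B eps : R) :
  (forall k, 0 <= f k) -> (forall m, sum_f_R0 f m <= B) -> B < eps ->
  exists l, infinite_sum f l /\ l < eps.
Proof.
  intros Hf Hbound HB.
  destruct (growing_cv (sum_f_R0 f)) as [l Hl].
  - intro m. simpl. specialize (Hf (S m)). lra.
  - exists B. intros x [m ->]. apply Hbound.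
  - exists l. split; [exact Hl|].
    assert (Hconst : Un_cv (fun _ => B) B).
    { intros e He. exists 0%nat. intros. rewrite R_dist_eq. lra. }
    pose proof (Rle_cv_lim Hbound Hl Hconst). lra.
Qed.

(* Splitting [/2 = 3/4 * 2/3] bounds the tail weights by a summable sequence
   with the small factor [(2/3)^N]. *)
Lemma half_pow_le (N k : nat) : (N <= k)%nat ->
  (/ 2) ^ k <= (3 / 4) ^ k * (2 / 3) ^ N.
Proof.
  intros HNk.
  replace (/ 2) with (3 / 4 * (2 / 3)) by field. rewrite Rpow_mult_distr.
  apply Rmult_le_compat_l; [apply pow_le; lra|].
  replace k with (N + (k - N))%nat by lia. rewrite pow_add.
  rewrite <- (Rmult_1_r ((2 / 3) ^ N)) at 2.
  apply Rmult_le_compat_l; [apply pow_le; lra|].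
  rewrite <- (pow1 (k - N)). apply pow_incr. lra.
Qed.

Lemma weighted_sum_lt_of_prefix_lt (eps : R) : 0 < eps ->
  exists N : nat, forall u : nat -> R,
    (forall k, 0 <= u k <= 1) ->
    (forall k, (k <= N)%nat -> u k < eps / 4) ->
    exists l, infinite_sum (fun k => (/ 2) ^ k * u k) l /\ l < eps.
Proof.
  intros Heps.
  destruct (pow_lt_1_zero (2 / 3) ltac:(rewrite Rabs_right; lra) (eps / 8)
              ltac:(lra)) as [N HN].
  specialize (HN N (le_n N)). rewrite Rabs_right in HN by (apply Rle_ge, pow_le; lra).
  set (c := (2 / 3) ^ N) in *.
  exists N. intros u Hu Hprefix.
  apply infinite_sum_lt_of_partial_sums_le with (B := 2 * (eps / 4) + 4 * c).
  - intro k. apply Rmult_le_pos; [apply pow_le; lra | apply Hu].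
  - intro m. apply Rle_trans with
      (sum_f_R0 (fun k => (/ 2) ^ k * (eps / 4) + (3 / 4) ^ k * c) m).
    + apply sum_Rle. intros k _.
      assert (Hhalf : 0 <= (/ 2) ^ k) by (apply pow_le; lra).
      assert (0 <= (3 / 4) ^ k * c) by (apply Rmult_le_pos; apply pow_le; lra).
      destruct (Compare_dec.le_lt_dec k N) as [HkN | HkN].
      * pose proof (Rmult_le_compat_l _ _ _ Hhalf (Rlt_le _ _ (Hprefix k HkN))). lra.
      * pose proof (Rmult_le_compat_l _ _ _ Hhalf (proj2 (Hu k))) as Hterm.
        pose proof (half_pow_le N k ltac:(lia)) as Htail. fold c in Htail.
        assert (0 <= (/ 2) ^ k * (eps / 4)) by (apply Rmult_le_pos; lra). lra.
    + rewrite sum_plus.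
      pose proof (sum_geometric_le (eps / 4) (/ 2) m ltac:(lra) ltac:(lra)).
      pose proof (sum_geometric_le c (3 / 4) m ltac:(lra) ltac:(unfold c; apply pow_le; lra)).
      replace (eps / 4 / (1 - / 2)) with (2 * (eps / 4)) in * by field.
      replace (c / (1 - 3 / 4)) with (4 * c) in * by field. lra.
  - lra.
Qed.

Lemma invlim_dist_lt_of_prefix (X : Type) (d : X -> X -> R) (eps : R) :
  (forall x y, 0 <= d x y) -> 0 < eps ->
  exists N : nat, forall s t : nat -> X,
    (forall k, (k <= N)%nat -> d (s k) (t k) < eps / 4) -> invlim_dist_lt d s t eps.
Proof.
  intros Hd0 Heps.
  destruct (weighted_sum_lt_of_prefix_lt eps Heps) as [N HN].
  exists N. intros s t Hst. apply HN.
  - intro k. split; [|apply Rmin_l].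
    unfold Rmin. destruct Rle_dec; [lra | apply Hd0].
  - intros k Hk. eapply Rle_lt_trans; [apply Rmin_r | apply Hst, Hk].
Qed.

Section ReversedOrbits.

Variables (X : Type) (F : X -> X -> Prop).

(* Beyond index T the backward reading runs out; it is continued forward by a
   selector [g] of F. *)
Definition rev_orbit (g : X -> X) (T : nat) (s : nat -> X) (j : nat) : X :=
  if (j <=? T)%nat then s (T - j)%nat else Nat.iter (j - T) g (s 0%nat).

Lemma rev_orbit_le (g : X -> X) (T : nat) (s : nat -> X) (j : nat) :
  (j <= T)%nat -> rev_orbit g T s j = s (T - j)%nat.
Proof. intros Hj. unfold rev_orbit. now rewrite (proj2 (Nat.leb_le j T) Hj). Qed.

Lemma rev_orbit_is_orbit (g : X -> X) (T : nat) (s : nat -> X) :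
  (forall x, F x (g x)) -> in_invlim F s -> is_orbit F (s T) (rev_orbit g T s).
Proof.
  intros Hg Hs. split.
  - rewrite rev_orbit_le by lia. f_equal. lia.
  - intro j. unfold rev_orbit.
    destruct (Nat.leb_spec (S j) T); destruct (Nat.leb_spec j T); try lia.
    + replace (T - j)%nat with (S (T - S j)) by lia. apply Hs.
    + replace j with T by lia. rewrite Nat.sub_diag.
      replace (S T - T)%nat with 1%nat by lia. apply Hg.
    + replace (S j - T)%nat with (S (j - T)) by lia. apply Hg.
Qed.

Lemma invlim_of_periodic_orbit (zo : nat -> X) (P T : nat) :
  (0 < P)%nat -> (forall j, F (zo j) (zo (S j))) -> zo P = zo 0%nat ->
  exists z : nat -> X,
    in_invlim F z /\ shift_iter P z = z /\
    (forall k, (k <= T)%nat -> (T - k < P)%nat -> z k = zo (T - k)%nat).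
Proof.
  intros HP Hzo Hloop.
  set (w := fun j => zo (j mod P)).
  assert (Hw : forall j, F (w j) (w (S j))).
  { intro j. unfold w.
    rewrite <- Nat.add_1_r, <- Nat.Div0.add_mod_idemp_l, Nat.add_1_r.
    pose proof (Nat.mod_upper_bound j P ltac:(lia)).
    set (r := (j mod P)%nat) in *.
    destruct (Nat.eq_dec (S r) P) as [Hwrap | Hin].
    - rewrite Hwrap, Nat.Div0.mod_same, <- Hloop, <- Hwrap. apply Hzo.
    - rewrite Nat.mod_small by lia. apply Hzo. }
  assert (Hwper : forall j m, w (j + m * P)%nat = w j).
  { intros j m. unfold w. now rewrite Nat.Div0.mod_add. }
  (* z k = w (T - k + P k): walking back one step is walking P - 1 steps forward. *)
  exists (fun k => w (T + (P - 1) * k)%nat). split; [|split].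
  - intro k. rewrite <- (Hwper (T + (P - 1) * k)%nat 1%nat).
    replace (T + (P - 1) * k + 1 * P)%nat with (S (T + (P - 1) * S k)) by nia.
    apply Hw.
  - apply functional_extensionality. intro k. unfold shift_iter.
    replace (T + (P - 1) * (P + k))%nat with (T + (P - 1) * k + (P - 1) * P)%nat by nia.
    apply Hwper.
  - intros k Hk HkP.
    replace (T + (P - 1) * k)%nat with (T - k + k * P)%nat by nia.
    rewrite Hwper. unfold w. now rewrite Nat.mod_small.
Qed.

End ReversedOrbits.

Arguments rev_orbit {X}.

Section ReversedBlocks.

Variables (n M N : nat) (a b : nat -> nat).
Hypothesis Hab : forall i, (i < n)%nat -> (a i <= b i)%nat.
Hypothesis Hgap : forall i, (S i < n)%nat -> (a (S i) - b i > M + N)%nat.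

Lemma block_start_ge_first (i : nat) : (i < n)%nat -> (a 0 <= a i)%nat.
Proof.
  induction i as [|i IH]; intros Hi; [lia|].
  specialize (IH ltac:(lia)). pose proof (Hab i ltac:(lia)).
  pose proof (Hgap i Hi). lia.
Qed.

Lemma block_end_le_last (i : nat) : (i < n)%nat -> (b i <= b (pred n))%nat.
Proof.
  assert (Hmono : forall m j, (j + m < n)%nat -> (b j <= b (j + m))%nat).
  { induction m as [|m IH]; intros j Hj; [rewrite Nat.add_0_r; lia|].
    specialize (IH j ltac:(lia)). pose proof (Hgap (j + m)%nat ltac:(lia)).
    pose proof (Hab (S (j + m)) ltac:(lia)).
    replace (j + S m)%nat with (S (j + m)) by lia. lia. }
  intros Hi. replace (pred n) with (i + (pred n - i))%nat by lia. apply Hmono. lia.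
Qed.

(* Block [i] of the shift, read backwards from [T] and lengthened by [N], is
   block [n - 1 - i] for F. *)
Let T : nat := (b (pred n) + N)%nat.
Definition rev_start (k : nat) : nat := (T - b (n - 1 - k) - N)%nat.
Definition rev_end (k : nat) : nat := (T - a (n - 1 - k))%nat.

Lemma rev_block_le (k : nat) : (k < n)%nat -> (rev_start k <= rev_end k)%nat.
Proof.
  intros Hk. unfold rev_start, rev_end. pose proof (Hab (n - 1 - k)%nat ltac:(lia)). lia.
Qed.

Lemma rev_block_gap (k : nat) : (S k < n)%nat -> (rev_start (S k) - rev_end k > M)%nat.
Proof.
  intros Hk. unfold rev_start, rev_end, T.
  replace (n - 1 - S k)%nat with (n - 2 - k)%nat by lia.
  replace (n - 1 - k)%nat with (S (n - 2 - k)) by lia.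
  pose proof (Hgap (n - 2 - k)%nat ltac:(lia)).
  pose proof (block_end_le_last (n - 2 - k)%nat ltac:(lia)).
  pose proof (block_end_le_last (S (n - 2 - k)) ltac:(lia)).
  pose proof (Hab (S (n - 2 - k)) ltac:(lia)). lia.
Qed.

Lemma rev_block_period (P : nat) : (0 < n)%nat ->
  (P > M + N + b (pred n) - a 0)%nat ->
  (P > M + rev_end (pred n) - rev_start 0)%nat.
Proof.
  intros Hn HP. unfold rev_start, rev_end, T.
  replace (n - 1 - pred n)%nat with 0%nat by lia.
  replace (n - 1 - 0)%nat with (pred n) by lia.
  pose proof (Hab 0%nat Hn). pose proof (block_end_le_last 0%nat Hn). lia.
Qed.

Lemma rev_block_window (i j k : nat) : (i < n)%nat -> (a i <= j <= b i)%nat ->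
  (k <= N)%nat ->
  (j + k <= T)%nat /\ (T - (j + k) <= T - a 0)%nat /\
  (rev_start (n - 1 - i) <= T - (j + k) <= rev_end (n - 1 - i))%nat.
Proof.
  intros Hi Hj Hk. unfold rev_start, rev_end.
  replace (n - 1 - (n - 1 - i))%nat with i by lia.
  pose proof (block_start_ge_first i Hi). pose proof (block_end_le_last i Hi).
  unfold T. lia.
Qed.

End ReversedBlocks.

Theorem theorem7 (X : Type) (d : X -> X -> R) (F : X -> X -> Prop) :
  is_metric d ->
  is_compact d ->
  set_valued_map d F ->
  spec_setvalued d F ->
  spec_shift d F.
Proof.
  intros [Hd0 _] _ [Hne _] Hspec eps Heps.
  assert (Hsel : exists g : X -> X, forall x, F x (g x)).
  { exists (fun x => proj1_sig (constructive_indefinite_description _ (Hne x))).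
    intro x. exact (proj2_sig (constructive_indefinite_description _ (Hne x))). }
  destruct Hsel as [g Hg].
  destruct (Hspec (eps / 4) ltac:(lra)) as [M HM].
  destruct (invlim_dist_lt_of_prefix X d eps Hd0 Heps) as [N HN].
  exists (M + N)%nat. intros n pts a b P Hn Hpts Hab Hgap HP.
  set (T := (b (pred n) + N)%nat).
  destruct (HM n (fun k => pts (n - 1 - k)%nat T) (rev_start n N b) (rev_end n N a b)
              (fun k => rev_orbit g T (pts (n - 1 - k)%nat)) P)
    as (z0 & zo & [Hzo0 Hzo] & Hclose & HzoP).
  - exact Hn.
  - intros k Hk. apply rev_block_le; assumption.
  - intros k Hk. apply rev_block_gap; assumption.
  - intros k Hk. apply rev_orbit_is_orbit; [exact Hg | apply Hpts; lia].
  - apply rev_block_period; assumption.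
  - destruct (invlim_of_periodic_orbit X F zo P T ltac:(lia) Hzo
                (eq_trans HzoP (eq_sym Hzo0))) as (z & Hz & Hper & Hzval).
    exists z. split; [exact Hz | split; [|exact Hper]].
    intros i j Hi Hj. apply HN. intros k Hk. unfold shift_iter.
    destruct (rev_block_window n M N a b Hab Hgap i j k Hi Hj Hk) as (HjT & Hwrap & Hwin).
    fold T in HjT, Hwrap, Hwin.
    rewrite Hzval by lia.
    specialize (Hclose (n - 1 - i)%nat _ ltac:(lia) Hwin).
    rewrite rev_orbit_le in Hclose by lia.
    replace (n - 1 - (n - 1 - i))%nat with i in Hclose by lia.
    replace (T - (T - (j + k)))%nat with (j + k)%nat in Hclose by lia.
    exact Hclose.
Qed.
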